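(* For every finite multiset $\Gamma$ of IMLL formulas and formula $\varphi$: if $\Gamma\Vdash\varphi$, then $\Gamma\vdash\varphi$ (derivable in NIMLL).
   Context: Fix a countably infinite set $\mathbb{A}$ of atoms. IMLL formulas: $\varphi::= p\in\mathbb{A}\mid\varphi\otimes\varphi\mid \mathrm{I}\mid\varphi\multimap\varphi$. Collections are finite multisets; ''$,$'' denotes multiset union, $\emptyset$ the empty multiset. NIMLL is the sequent-style natural deduction system with rules: (ax) $\varphi\triangleright\varphi$; ($\multimap$I) from $\Gamma,\varphi\triangleright\psi$ infer $\Gamma\triangleright\varphi\multimap\psi$; ($\multimap$E) from $\Gamma\triangleright\varphi\multimap\psi$ and $\Delta\triangleright\varphi$ infer $\Gamma,\Delta\triangleright\psi$; ($\mathrm{I}$I) $\emptyset\triangleright\mathrm{I}$; ($\mathrm{I}$E) from $\Gamma\triangleright\varphi$ and $\Delta\triangleright\mathrm{I}$ infer $\Gamma,\Delta\triangleright\varphi$; ($\otimes$I) from $\Gamma\triangleright\varphi$ and $\Delta\triangleright\psi$ infer $\Gamma,\Delta\triangleright\varphi\otimes\psi$; ($\otimes$E) from $\Gamma\triangleright\varphi\otimes\psi$ and $\Delta,\varphi,\psi\triangleright\chi$ infer $\Gamma,\Delta\triangleright\chi$. $\Gamma\vdash\varphi$ means $\Gamma\triangleright\varphi$ is derivable. An atomic rule is $(P_1\triangleright p_1,\dots,P_n\triangleright p_n)\Rightarrow p$ ($n\ge0$, $P_i$ finite multisets of atoms); a base is a set of atomic rules. Derivability $\vdash_{\mathscr{B}}$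 is the least relation with (Ref) $[p]\vdash_{\mathscr{B}}p$; (App) if $(P_1\triangleright p_1,\dots,P_n\triangleright p_n)\Rightarrow p\in\mathscr{B}$ and $S_i,P_i\vdash_{\mathscr{B}}p_i$ for all $i$, then $S_1,\dots,S_n\vdash_{\mathscr{B}}p$. Support: (At) $\Vdash^{P}_{\mathscr{B}}p$ iff $P\vdash_{\mathscr{B}}p$; ($\otimes$) $\Vdash^{P}_{\mathscr{B}}\varphi\otimes\psi$ iff for every $\mathscr{X}\supseteq\mathscr{B}$, multiset of atoms $U$, atom $p$, if $\varphi,\psi\Vdash^{U}_{\mathscr{X}}p$ then $\Vdash^{P,U}_{\mathscr{X}}p$; ($\mathrm{I}$) $\Vdash^{P}_{\mathscr{B}}\mathrm{I}$ iff for every $\mathscr{X}\supseteq\mathscr{B}$, $U$, $p$, if $\Vdash^{U}_{\mathscr{X}}p$ then $\Vdash^{P,U}_{\mathscr{X}}p$; ($\multimap$) $\Vdash^{P}_{\mathscr{B}}\varphi\multimap\psi$ iff $\varphi\Vdash^{P}_{\mathscr{B}}\psi$; (comma) for nonempty $\Gamma,\Delta$, $\Vdash^{P}_{\mathscr{B}}\Gamma,\Delta$ iff $P=U,V$ for some $U,V$ with $\Vdash^{U}_{\mathscr{B}}\Gamma$, $\Vdash^{V}_{\mathscr{B}}\Delta$ (singleton $[\varphi]$ supported iff $\varphi$ is); (Inf) for nonempty $\Gamma$, $\Gamma\Vdash^{P}_{\mathscr{B}}\varphi$ iff for every $\mathscr{X}\supseteq\mathscr{B}$ and $U$, if $\Vdash^{U}_{\mathscr{X}}\Gamma$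 then $\Vdash^{P,U}_{\mathscr{X}}\varphi$; for empty $\Gamma$ it means $\Vdash^{P}_{\mathscr{B}}\varphi$. Validity: $\Gamma\Vdash\varphi$ iff $\Gamma\Vdash^{\emptyset}_{\mathscr{B}}\varphi$ for every base $\mathscr{B}$. *)

(* Multisets are represented as lists taken up to Permutation. *)
From Stdlib Require Import List Permutation Arith.
Import ListNotations.

Definition atom := nat.

Inductive formula : Type :=
| Atom : atom -> formula
| Tensor : formula -> formula -> formula
| One : formula
| Lolli : formula -> formula -> formula.

Inductive nd : list formula -> formula -> Prop :=
| nd_perm G G' A : nd G A -> Permutation G G' -> nd G' A
| nd_ax A : nd [A] A
| nd_lolliI G A B : nd (A :: G) B -> nd G (Lolli A B)
| nd_lolliE G D A B : nd G (Lolli A B) -> nd D A -> nd (G ++ D) B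
| nd_oneI : nd [] One
| nd_oneE G D A : nd G A -> nd D One -> nd (G ++ D) A
| nd_tensorI G D A B : nd G A -> nd D B -> nd (G ++ D) (Tensor A B)
| nd_tensorE G D A B C : nd G (Tensor A B) -> nd (A :: B :: D) C -> nd (G ++ D) C.

Definition derivable (G : list formula) (A : formula) : Prop := nd G A.

(* (P_1 |> p_1, ..., P_n |> p_n) => p  is  (premises, p). *)
Definition atomic_rule : Type := (list (list atom * atom) * atom)%type.
Definition base : Type := atomic_rule -> Prop.
Definition ext (B X : base) : Prop := forall r, B r -> X r.

Inductive bderiv (B : base) : list atom -> atom -> Prop :=
| b_ref p : bderiv B [p] p
| b_app (prems : list (list atom * atom)) (p : atom) (Ss : list (list atom)) (S : list atom) :
    B (prems, p) ->
    length Ss = length prems ->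
    (forall i, i < length prems ->
       bderiv B (nth i Ss [] ++ fst (nth i prems ([], 0)))
                (snd (nth i prems ([], 0)))) ->
    Permutation S (concat Ss) ->
    bderiv B S p.

Fixpoint supp (B : base) (P : list atom) (A : formula) : Prop :=
  match A with
  | Atom p => bderiv B P p
  | Tensor A1 A2 =>
      forall (X : base) (U : list atom) (p : atom), ext B X ->
        (forall (Y : base) (V : list atom), ext X Y ->
           (exists V1 V2, Permutation V (V1 ++ V2) /\ supp Y V1 A1 /\ supp Y V2 A2) ->
           bderiv Y (U ++ V) p) ->
        bderiv X (P ++ U) p
  | One =>
      forall (X : base) (U : list atom) (p : atom), ext B X ->
        bderiv X U p -> bderiv X (P ++ U) p
  | Lolli A1 A2 =>
      forall (X : base) (U : list atom), ext B X ->
        supp X U A1 -> supp X (P ++ U) A2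
  end.

Fixpoint supp_ctx (B : base) (P : list atom) (G : list formula) : Prop :=
  match G with
  | [] => False  (* never used: contexts handled here are nonempty *)
  | [A] => supp B P A
  | A :: G' => exists U V, Permutation P (U ++ V) /\ supp B U A /\ supp_ctx B V G'
  end.

Definition inf (B : base) (P : list atom) (G : list formula) (A : formula) : Prop :=
  match G with
  | [] => supp B P A
  | _ => forall (X : base) (U : list atom), ext B X -> supp_ctx X U G -> supp X (P ++ U) A
  end.

Definition valid (G : list formula) (A : formula) : Prop :=
  forall B : base, inf B [] G A.

(** Completeness via a single base that simulates NIMLL.  Fix [m] above every
    atom of [Gamma] and [phi], and flatten each formula [x] to an atom [flat m x]:
    atoms below [m] are kept, every other formula gets a fresh atom [m + code x].
    The base [nd_base m] has, for every formula, the atomic versions of its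
    introduction and elimination rules.  Over any extension of this base,
    support of [x] coincides with base-derivability of [flat m x]; so validity
    of [Gamma ||- phi] yields a base derivation of [flat m phi] from the flattened
    context, which unflattens rule by rule into an NIMLL derivation. *)

From Stdlib Require Import List Permutation Arith Lia Cantor ClassicalEpsilon.
Import ListNotations.

Fixpoint code (x : formula) : nat :=
  match x with
  | Atom p => to_nat (0, p)
  | Tensor a b => to_nat (1, to_nat (code a, code b))
  | One => to_nat (2, 0)
  | Lolli a b => to_nat (3, to_nat (code a, code b))
  end.

Lemma to_nat_inj a b c d : to_nat (a, b) = to_nat (c, d) -> a = c /\ b = d.
Proof.
  intro H. apply (f_equal of_nat) in H. rewrite !cancel_of_to in H.
  now injection H.
Qed.

Arguments to_nat : simpl never.

Lemma code_inj x y : code x = code y -> x = y.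
Proof.
  revert y; induction x; intros [] H; simpl in H;
    repeat match goal with
    | H : to_nat _ = to_nat _ |- _ => apply to_nat_inj in H as [? ?]
    end; try discriminate; subst; f_equal; auto.
Qed.

Definition flat (m : nat) (x : formula) : atom :=
  match x with
  | Atom p => if p <? m then p else m + code x
  | _ => m + code x
  end.

Lemma flat_atom m p : p < m -> flat m (Atom p) = p.
Proof. intro H. simpl. now apply Nat.ltb_lt in H as ->. Qed.

Lemma flat_cases m x :
  (exists p, x = Atom p /\ p < m /\ flat m x = p) \/ flat m x = m + code x.
Proof.
  destruct x as [p| | |]; auto. simpl.
  destruct (Nat.ltb_spec p m); eauto.
Qed.

Arguments flat : simpl never.

Lemma flat_inj m x y : flat m x = flat m y -> x = y.
Proof.
  intro H.
  destruct (flat_cases m x) as [(p & -> & Hp & Ex) | Ex],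
           (flat_cases m y) as [(q & -> & Hq & Ey) | Ey]; try lia.
  - congruence.
  - apply code_inj. lia.
Qed.

(* Atoms outside the image of [flat m] are sent to an arbitrary formula. *)
Definition unflat (m : nat) (n : atom) : formula :=
  match excluded_middle_informative (exists x, flat m x = n) with
  | left H => proj1_sig (constructive_indefinite_description _ H)
  | right _ => Atom n
  end.

Lemma unflat_flat m x : unflat m (flat m x) = x.
Proof.
  unfold unflat. destruct excluded_middle_informative as [H | H].
  - destruct constructive_indefinite_description as [y Hy]. exact (flat_inj m _ _ Hy).
  - exfalso. eauto.
Qed.

Lemma map_unflat_flat m G : map (unflat m) (map (flat m) G) = G.
Proof.
  rewrite map_map. erewrite map_ext by apply unflat_flat. apply map_id.
Qed.

Fixpoint max_atom (x : formula) : nat :=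
  match x with
  | Atom p => p
  | Tensor a b | Lolli a b => max (max_atom a) (max_atom b)
  | One => 0
  end.

Lemma ext_refl B : ext B B.
Proof. now intros r. Qed.

Lemma ext_trans B X Y : ext B X -> ext X Y -> ext B Y.
Proof. intros HX HY r Hr. auto. Qed.

Lemma bderiv_ext B X S p : ext B X -> bderiv B S p -> bderiv X S p.
Proof.
  intros HX H. induction H.
  - constructor.
  - eapply b_app; eauto.
Qed.

Lemma bderiv_perm B S S' p : Permutation S S' -> bderiv B S p -> bderiv B S' p.
Proof.
  intros HS H. destruct H as [p | prems p Ss S Hr Hlen Hprems HSs].
  - apply Permutation_length_1_inv in HS as ->. constructor.
  - apply b_app with prems Ss; auto. now rewrite <- HS.
Qed.

Lemma bderiv_app0 B p : B ([], p) -> bderiv B [] p.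
Proof. intro Hr. apply b_app with [] []; simpl; auto; lia. Qed.

Lemma bderiv_app1 B P1 p1 p S1 :
  B ([(P1, p1)], p) -> bderiv B (S1 ++ P1) p1 -> bderiv B S1 p.
Proof.
  intros Hr H1. apply b_app with [(P1, p1)] [S1]; auto.
  - intros [|i] Hi; simpl in *; [exact H1 | lia].
  - simpl. now rewrite app_nil_r.
Qed.

Lemma bderiv_app2 B P1 p1 P2 p2 p S1 S2 :
  B ([(P1, p1); (P2, p2)], p) ->
  bderiv B (S1 ++ P1) p1 -> bderiv B (S2 ++ P2) p2 -> bderiv B (S1 ++ S2) p.
Proof.
  intros Hr H1 H2. apply b_app with [(P1, p1); (P2, p2)] [S1; S2]; auto.
  - intros [|[|i]] Hi; simpl in *; [exact H1 | exact H2 | lia].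
  - simpl. now rewrite app_nil_r.
Qed.

Inductive nd_base (m : nat) : base :=
| nd_base_tensorI a b :
    nd_base m ([([], flat m a); ([], flat m b)], flat m (Tensor a b))
| nd_base_tensorE a b p :
    nd_base m ([([], flat m (Tensor a b)); ([flat m a; flat m b], p)], p)
| nd_base_lolliI a b :
    nd_base m ([([flat m a], flat m b)], flat m (Lolli a b))
| nd_base_lolliE a b :
    nd_base m ([([], flat m (Lolli a b)); ([], flat m a)], flat m b)
| nd_base_oneI : nd_base m ([], flat m One)
| nd_base_oneE p : nd_base m ([([], flat m One); ([], p)], p).

Lemma nd_base_sound m S p :
  bderiv (nd_base m) S p -> nd (map (unflat m) S) (unflat m p).
Proof.
  induction 1 as [p | prems p Ss S Hr Hlen _ IH HS]; [apply nd_ax |].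
  apply nd_perm with (map (unflat m) (concat Ss));
    [| now apply Permutation_map, Permutation_sym].
  inversion Hr; subst; destruct Ss as [| S1 [| S2 [| ]]]; try discriminate; simpl in *;
    try pose proof (IH 0 ltac:(lia)) as H1; try pose proof (IH 1 ltac:(lia)) as H2;
    simpl in *; rewrite ?app_nil_r, ?map_app, ?unflat_flat in *.
  - now apply nd_tensorI.
  - apply nd_tensorE with a b; [easy |].
    apply nd_perm with (map (unflat m) S2 ++ [a; b]);
      [now rewrite <- (map_unflat_flat m [a; b]) | apply Permutation_app_comm].
  - apply nd_lolliI. apply nd_perm with (map (unflat m) S1 ++ [a]);
      [now rewrite <- (map_unflat_flat m [a]) |].
    apply Permutation_sym, Permutation_cons_append.
  - now apply nd_lolliE with a.
  - apply nd_oneI.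
  - apply nd_perm with (map (unflat m) S2 ++ map (unflat m) S1);
      [now apply nd_oneE | apply Permutation_app_comm].
Qed.

Section SuppFlat.

Variable m : nat.

Definition supp_is_flat (x : formula) : Prop :=
  forall X U, ext (nd_base m) X -> (supp X U x <-> bderiv X U (flat m x)).

Lemma supp_is_flat_atom p : p < m -> supp_is_flat (Atom p).
Proof. intros Hp X U _. simpl. now rewrite flat_atom. Qed.

Lemma supp_is_flat_one : supp_is_flat One.
Proof.
  intros X U HX. split.
  - intro H. rewrite <- (app_nil_r U). apply H; [apply ext_refl |].
    apply bderiv_app0, HX, nd_base_oneI.
  - intros H Y V p HY Hp.
    apply bderiv_app2 with [] (flat m One) [] p;
      [apply (ext_trans _ _ _ HX HY), nd_base_oneE | |];
      rewrite app_nil_r; [exact (bderiv_ext _ _ _ _ HY H) | exact Hp].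
Qed.

Lemma supp_is_flat_tensor a b :
  supp_is_flat a -> supp_is_flat b -> supp_is_flat (Tensor a b).
Proof.
  intros Ha Hb X U HX. split.
  - intro H. rewrite <- (app_nil_r U). apply H; [apply ext_refl |].
    intros Y V HY (V1 & V2 & HV & H1 & H2).
    assert (HY' : ext (nd_base m) Y) by exact (ext_trans _ _ _ HX HY).
    apply bderiv_perm with (V1 ++ V2); [now symmetry |].
    apply bderiv_app2 with [] (flat m a) [] (flat m b);
      [apply HY', nd_base_tensorI | |]; rewrite app_nil_r;
      [now apply (Ha Y V1 HY') | now apply (Hb Y V2 HY')].
  - intros H Y V p HY Hp.
    assert (HY' : ext (nd_base m) Y) by exact (ext_trans _ _ _ HX HY).
    apply bderiv_app2 with [] (flat m (Tensor a b)) [flat m a; flat m b] p;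
      [apply HY', nd_base_tensorE | rewrite app_nil_r; exact (bderiv_ext _ _ _ _ HY H) |].
    apply Hp; [apply ext_refl |].
    exists [flat m a], [flat m b]. split; [reflexivity |].
    split; [apply (Ha Y _ HY') | apply (Hb Y _ HY')]; constructor.
Qed.

Lemma supp_is_flat_lolli a b :
  supp_is_flat a -> supp_is_flat b -> supp_is_flat (Lolli a b).
Proof.
  intros Ha Hb X U HX. split.
  - intro H. apply bderiv_app1 with [flat m a] (flat m b); [apply HX, nd_base_lolliI |].
    apply (Hb X _ HX), H; [apply ext_refl |].
    apply (Ha X _ HX). constructor.
  - intros H Y V HY HV.
    assert (HY' : ext (nd_base m) Y) by exact (ext_trans _ _ _ HX HY).
    apply (Hb Y _ HY').
    apply bderiv_app2 with [] (flat m (Lolli a b)) [] (flat m a);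
      [apply HY', nd_base_lolliE | |]; rewrite app_nil_r;
      [exact (bderiv_ext _ _ _ _ HY H) | now apply (Ha Y V HY')].
Qed.

Lemma supp_flat x : max_atom x < m -> supp_is_flat x.
Proof.
  induction x; simpl; intro Hx.
  - now apply supp_is_flat_atom.
  - apply supp_is_flat_tensor; [apply IHx1 | apply IHx2]; lia.
  - apply supp_is_flat_one.
  - apply supp_is_flat_lolli; [apply IHx1 | apply IHx2]; lia.
Qed.

Lemma supp_ctx_flat G :
  G <> [] -> (forall g, In g G -> max_atom g < m) ->
  supp_ctx (nd_base m) (map (flat m) G) G.
Proof.
  assert (Hself : forall g, max_atom g < m -> supp (nd_base m) [flat m g] g)
    by (intros g Hg; apply (supp_flat g Hg _ _ (ext_refl _)); constructor).
  induction G as [| g [| g' G] IH]; intros HG Hbound; [easy | |].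
  - apply Hself, Hbound. now left.
  - exists [flat m g], (map (flat m) (g' :: G)). split; [reflexivity |]. split.
    + apply Hself, Hbound. now left.
    + apply IH; [easy |]. intros h Hh. apply Hbound. now right.
Qed.

Lemma inf_nd_base G A :
  max_atom A < m -> (forall g, In g G -> max_atom g < m) ->
  inf (nd_base m) [] G A -> bderiv (nd_base m) (map (flat m) G) (flat m A).
Proof.
  intros HA HG Hinf. apply (supp_flat A HA _ _ (ext_refl _)).
  destruct G as [| g G]; [exact Hinf |].
  exact (Hinf _ _ (ext_refl _) (supp_ctx_flat (g :: G) ltac:(discriminate) HG)).
Qed.

End SuppFlat.

Theorem theorem4 (G : list formula) (A : formula) :
  valid G A -> derivable G A.
Proof.
  intro Hvalid.
  set (m := S (list_max (map max_atom (A :: G)))).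
  assert (Hbound : forall x, In x (A :: G) -> max_atom x < m).
  { intros x Hx. unfold m. apply Nat.lt_succ_r.
    apply (proj1 (Forall_forall _ _) (proj1 (list_max_le _ _) (le_n _))), in_map, Hx. }
  pose proof (inf_nd_base m G A (Hbound A (or_introl eq_refl))
                (fun g Hg => Hbound g (or_intror Hg)) (Hvalid (nd_base m))) as Hder.
  apply nd_base_sound in Hder.
  now rewrite map_unflat_flat, unflat_flat in Hder.
Qed.
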